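(* Let $G$ be an undirected weighted graph with vertex set $V(G)$, weight function $w$ and vertex weight $\nu$ as described in the context. Let $\mathcal{S}=(S_m)_{m=0,\ldots,n}$ be a partition of $V(G)$ into disjoint sets, and assume $K_m=K_m(\mathcal{S})>0$ for all $m=0,\ldots,n-1$. For $f:V(G)\to\mathbb{C}$ write $f_0=f|_{S_0}$. Then for all $1<p<\infty$, $1<q<\infty$ with $1/p+1/q=1$, and all $f\in \ell^p_\nu(G)$, \[ \| f \|_{p,\nu} \le \left( \sum_{m=0}^{n} \prod_{j=0}^{m-1} \frac{D_j}{K_j} \right)^{1/p} \| f_0 \|_{p,\nu} + \left( \sum_{m=1}^n \left( \sum_{k=1}^m \frac{1}{K_{k-1}^{q/p}} \left( \prod_{i=k}^{m-1} \frac{D_i}{K_i} \right)^{q/p} \right)^{p/q} \right)^{1/p} \| \nabla_w f \|_{p}. \] Moreover, for all $f\in \ell^1_\nu(G)$, \[ \| f \|_{1,\nu} \le \left( \sum_{m=0}^{n} \prod_{j=0}^{m-1} \frac{D_j}{K_j} \right) \| f_0 \|_{1,\nu} + \max_{k=1,\ldots,n} \left( \frac{1}{K_{k-1}} \sum_{m=k}^n \prod_{i=k}^{m-1} \frac{D_i}{K_i} \right) \| \nabla_w f \|_{1}. \]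
   Context: $G$ is an undirected weighted graph: $V(G)$ is a (countable) vertex set and $w:V(G)\times V(G)\to[0,\infty)$ is symmetric ($w(u,v)=w(v,u)$) with $w(u,u)=0$; the edges are the pairs $(u,v)$ with $w(u,v)\neq 0$. A strictly positive weight $\nu:V(G)\to(0,\infty)$ is fixed. For $1\le p<\infty$, $\ell^p_\nu(G)$ is the space of $f:V(G)\to\mathbb{C}$ with $\|f\|_{p,\nu}=\left(\sum_{v\in V(G)}|f(v)|^p\nu(v)\right)^{1/p}<\infty$; for a subset $A$, $\|f|_A\|_{p,\nu}=\left(\sum_{v\in A}|f(v)|^p\nu(v)\right)^{1/p}$. The weighted gradient $p$-norm is $\|\nabla_w f\|_p=\left(\sum_{u,v\in V(G)}|f(u)-f(v)|^p w(u,v)\right)^{1/p}$ (sum over ordered pairs). For $A\subset V(G)$ and $v\in V(G)$, $w_A(v)=\sum_{u\in A}w(u,v)$. For a partition $\mathcal{S}=(S_m)_{m=0,\ldots,n}$ of $V(G)$: $D_m=D_m(\mathcal{S})=\sup_{v\in S_m} \frac{w_{S_{m+1}}(v)}{\nu(v)}$ and $K_m=K_m(\mathcal{S})=\inf_{v\in S_{m+1}}\frac{w_{S_m}(v)}{\nu(v)}$. Convention: a product over an empty index range equals $1$ and a sum over an empty index range equals $0$. *)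

From HB Require Import structures.
From mathcomp Require Import all_boot all_order all_algebra.
From mathcomp Require Import all_classical all_reals all_analysis.
From mathcomp Require Import complex.
Set Implicit Arguments. Unset Strict Implicit. Unset Printing Implicit Defensive.
Import Order.TTheory GRing.Theory Num.Theory.
Local Open Scope classical_set_scope.
Local Open Scope ring_scope.

Section GraphDefs.
Variables (R : realType) (V : choiceType).

Definition cmod (z : R[i]) : R := Normc.normc z.

Definition wA (w : V -> V -> R) (A : set V) (v : V) : \bar R :=
  (\esum_(u in A) (w u v)%:E)%R.

Definition Dm (w : V -> V -> R) (nu : V -> R) (S : nat -> set V) (m : nat)
  : \bar R :=
  ereal_sup [set (wA w (S m.+1) v * (nu v)^-1%:E)%E | v in S m].

Definition Km (w : V -> V -> R) (nu : V -> R) (S : nat -> set V) (m : nat)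
  : \bar R :=
  ereal_inf [set (wA w (S m) v * (nu v)^-1%:E)%E | v in S m.+1].

Definition psum (p : R) (nu : V -> R) (A : set V) (f : V -> R[i]) : \bar R :=
  (\esum_(v in A) ((cmod (f v)) `^ p * nu v)%:E)%R.

Definition pnorm (p : R) (nu : V -> R) (A : set V) (f : V -> R[i]) : \bar R :=
  poweR (psum p nu A f) p^-1.

(* ||grad_w f||_p = (sum_{(u,v)} |f u - f v|^p w(u,v))^(1/p), ordered pairs *)
Definition gradnorm (p : R) (w : V -> V -> R) (f : V -> R[i]) : \bar R :=
  poweR (\esum_(uv in [set: V * V])
           ((cmod (f uv.1 - f uv.2)) `^ p * w uv.1 uv.2)%:E)%R p^-1.

End GraphDefs.

From HB Require Import structures.
From mathcomp Require Import all_boot all_order all_algebra.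
From mathcomp Require Import all_classical all_reals all_analysis.
From mathcomp Require Import complex.
From mathcomp Require Import ring zify.
Set Implicit Arguments. Unset Strict Implicit. Unset Printing Implicit Defensive.
Import Order.TTheory GRing.Theory Num.Theory.
Local Open Scope classical_set_scope.
Local Open Scope ring_scope.

(* Write a_m for the p-th power of the norm of f on S_m and g_m for the part of
   the gradient sum carried by the edges between S_m and S_(m+1).  For v in
   S_(m+1) we have K_m nu(v) |f v|^p <= sum_(u in S_m) w(u,v) |f v|^p; splitting
   |f v| <= |f u| + |f u - f v| with the convexity weights l^(1-p), (1-l)^(1-p)
   and using sum_(v in S_(m+1)) w(u,v) <= D_m nu(u) gives, for every 0 < l < 1,
   K_m a_(m+1) <= l^(1-p) D_m a_m + (1-l)^(1-p) g_m.  Optimizing in l turns this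
   into the one-step estimate (K_m a_(m+1))^(1/p) <= (D_m a_m)^(1/p) + g_m^(1/p).
   Iterating it bounds each a_m^(1/p) by a_0^(1/p) and the g_k^(1/p), k < m;
   Minkowski's inequality in m and Hoelder's inequality in k give the estimate
   for p > 1, and exchanging the two summations gives the one for p = 1. *)

Section PowerInequalities.
Variable R : realType.
Implicit Types (a b l p q x y X Y Z : R).

(* [split_weight p l = l^(1-p)] for [l > 0]. *)
Definition split_weight p l : R := l * (l^-1) `^ p.

Lemma split_weight_ge0 p l : 0 <= l -> 0 <= split_weight p l.
Proof. by move=> l0; rewrite mulr_ge0 ?powR_ge0. Qed.

(* Convexity of [x `^ p] at the point [l (a / l) + (1 - l) (b / (1 - l))]. *)
Lemma powRD_le_split p l a b : 1 <= p -> 0 < l < 1 -> 0 <= a -> 0 <= b ->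
  (a + b) `^ p <= split_weight p l * a `^ p + split_weight p (1 - l) * b `^ p.
Proof.
move=> p1 /andP[l0 l1] a0 b0.
have l1' : 0 < 1 - l by rewrite subr_gt0.
pose t : {i01 R} := Itv01 (ltW l0) (ltW l1).
have := @convex_powR R p p1 t (a / l) (b / (1 - l)).
rewrite !inE /= !in_itv /= !andbT !divr_ge0 ?(ltW l0) ?(ltW l1') // => /(_ isT isT).
rewrite [conv _ _ _]convRE /= /unstable.onem.
rewrite !mulrA !(mulrC l) !(mulrC (1 - l)) -!mulrA !divff ?gt_eqF // !mulr1.
rewrite /split_weight !powRM ?invr_ge0 ?(ltW l0) ?(ltW l1') //.
by rewrite convRE /= /unstable.onem (mulrC (a `^ p)) (mulrC (b `^ p)) !mulrA.
Qed.

Lemma powRK p x : 0 < p -> 0 <= x -> (x `^ p) `^ p^-1 = x.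
Proof. by move=> p0 x0; rewrite -powRrM mulfV ?gt_eqF // powRr1. Qed.

Lemma powRVK p x : 0 < p -> 0 <= x -> (x `^ p^-1) `^ p = x.
Proof. by move=> p0 x0; rewrite -powRrM mulVf ?gt_eqF // powRr1. Qed.

Lemma powR_inv x r : 0 <= x -> (x^-1) `^ r = (x `^ r)^-1.
Proof.
rewrite le_eqVlt => /predU1P[<-|xp].
  by rewrite invr0 /powR eqxx; case: (r == 0); rewrite ?invr1 ?invr0.
have := @powRM R (x^-1) x r; rewrite invr_ge0 (ltW xp) mulVf ?gt_eqF // powR1.
move=> /(_ isT isT) H.
have xr : x `^ r != 0 by rewrite gt_eqF // powR_gt0.
by apply: (mulIf xr); rewrite -H mulVf.
Qed.

(* [split_weight p l] tends to [1] as [l] tends to [1]; the witness below is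
   [l = 2 / (1 + (Z / Y)^(1/(p-1)))]. *)
Lemma le_of_split_weight p Z Y : 1 <= p -> 0 <= Z -> 0 <= Y ->
  (forall l, 0 < l < 1 -> Z <= split_weight p l * Y) -> Z <= Y.
Proof.
move=> p1 Z0 Y0 H; rewrite leNgt; apply/negP => YZ.
have half : 0 < (2^-1 : R) < 1 by rewrite invr_gt0 ltr0n /= invf_lt1 ?ltr1n.
have [Y00|Yn0] := eqVneq Y 0.
  by move: (H _ half) YZ; rewrite Y00 mulr0 => Zle /lt_le_trans /(_ Zle); rewrite ltxx.
have Ypos : 0 < Y by rewrite lt_neqAle eq_sym Yn0.
have [pe|pn1] := eqVneq p 1.
  move: (H _ half) YZ; rewrite /split_weight pe powRr1 ?invr_ge0 // mulfV ?mul1r //.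
  by move=> Zle /lt_le_trans /(_ Zle); rewrite ltxx.
have p1s : 1 < p by rewrite lt_neqAle eq_sym pn1 p1.
have e0 : 0 < (p - 1)^-1 by rewrite invr_gt0 subr_gt0.
have ZY1 : 1 < Z / Y by rewrite ltr_pdivlMr // mul1r.
set rho := (Z / Y) `^ (p - 1)^-1.
have rho1 : 1 < rho.
  have := @gt0_ltr_powR R _ e0 1 (Z / Y).
  by rewrite powR1; apply; rewrite ?nnegrE ?ler01 ?(le_trans ler01 (ltW ZY1)).
set m := (1 + rho) / 2.
have m1 : 1 < m by rewrite /m ltr_pdivlMr // mul1r -[2]/(1 + 1 : R) ltrD2l.
have mrho : m < rho by rewrite /m ltr_pdivrMr // mulrDr mulr1 ltrD2r.
have m0 : 0 < m by rewrite (lt_trans ltr01).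
have hm : 0 < m^-1 < 1 by rewrite invr_gt0 m0 /= invf_lt1.
move: (H _ hm); rewrite /split_weight invrK.
have -> : m^-1 * m `^ p = m `^ (p - 1).
  by rewrite powRB ?gt_eqF ?implybT // powRr1 ?ltW // mulrC.
move=> HZ.
have : m `^ (p - 1) < rho `^ (p - 1).
  by apply: gt0_ltr_powR; rewrite ?subr_gt0 ?nnegrE ?ltW // (lt_trans ltr01).
rewrite /rho -powRrM mulVf ?gt_eqF ?subr_gt0 // powRr1 ?divr_ge0 //.
by rewrite -(ltr_pM2r Ypos) divfK ?gt_eqF // => /(le_lt_trans HZ); rewrite ltxx.
Qed.

(* Optimizing the split at [l = X^(1/p) / (X^(1/p) + Y^(1/p))]. *)
Lemma powRV_le_of_split p Z X Y : 1 <= p -> 0 <= Z -> 0 <= X -> 0 <= Y ->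
  (forall l, 0 < l < 1 -> Z <= split_weight p l * X + split_weight p (1 - l) * Y) ->
  Z `^ p^-1 <= X `^ p^-1 + Y `^ p^-1.
Proof.
move=> p1 Z0 X0 Y0 H.
have p0 : 0 < p by rewrite (lt_le_trans ltr01).
have pi0 : p^-1 != 0 by rewrite invr_eq0 gt_eqF.
have powRV_le U : 0 <= U -> Z <= U -> Z `^ p^-1 <= U `^ p^-1.
  by move=> U0; apply: ge0_ler_powR; rewrite ?invr_ge0 ?nnegrE ?(ltW p0).
have [X00|Xn0] := eqVneq X 0.
  rewrite X00 powR0 // add0r; apply: powRV_le => //.
  apply: (le_of_split_weight p1) => // l /andP[l0 l1].
  have := H (1 - l); rewrite X00 subKr mulr0 add0r; apply.
  by rewrite subr_gt0 l1 /= gtrBl.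
have [Y00|Yn0] := eqVneq Y 0.
  rewrite Y00 powR0 // addr0; apply: powRV_le => //.
  apply: (le_of_split_weight p1) => // l hl.
  by have := H l hl; rewrite Y00 mulr0 addr0.
have Xp : 0 < X by rewrite lt_neqAle eq_sym Xn0.
have Yp : 0 < Y by rewrite lt_neqAle eq_sym Yn0.
set x := X `^ p^-1; set y := Y `^ p^-1.
have xp : 0 < x by rewrite powR_gt0.
have yp : 0 < y by rewrite powR_gt0.
have xyp : 0 < x + y by rewrite addr_gt0.
have hl : 0 < x / (x + y) < 1 by rewrite divr_gt0 //= ltr_pdivrMr // mul1r ltrDl.
have := H _ hl.
have -> : 1 - x / (x + y) = y / (x + y) by field; rewrite gt_eqF.
have -> : X = x `^ p by rewrite /x powRVK ?ltW.
have -> : Y = y `^ p by rewrite /y powRVK ?ltW.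
have weightE u : 0 < u ->
    split_weight p (u / (x + y)) * u `^ p = u / (x + y) * (x + y) `^ p.
  move=> u0; rewrite /split_weight invf_div -mulrA -powRM ?divr_ge0 ?ltW //.
  by rewrite divfK // gt_eqF.
rewrite (weightE x xp) (weightE y yp) -mulrDl -mulrDl divff ?gt_eqF // mul1r.
by move=> HZ; rewrite -(powRK p0 (ltW xyp)); apply: powRV_le; rewrite ?powR_ge0.
Qed.

Lemma minkowski_sum (I : Type) (s : seq I) p (y z : I -> R) : 1 <= p ->
  (forall i, 0 <= y i) -> (forall i, 0 <= z i) ->
  (\sum_(i <- s) (y i + z i) `^ p) `^ p^-1 <=
  (\sum_(i <- s) y i `^ p) `^ p^-1 + (\sum_(i <- s) z i `^ p) `^ p^-1.
Proof.
move=> p1 y0 z0; apply: powRV_le_of_split => //;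
  try by rewrite sumr_ge0 // => i _; rewrite powR_ge0.
move=> l hl; rewrite !mulr_sumr -big_split /=; apply: ler_sum => i _.
exact: powRD_le_split.
Qed.

Lemma hoelder_sum (I : Type) (s : seq I) p q (a b : I -> R) : 0 < p -> 0 < q ->
  p^-1 + q^-1 = 1 -> (forall i, 0 <= a i) -> (forall i, 0 <= b i) ->
  \sum_(i <- s) a i * b i <=
  (\sum_(i <- s) a i `^ p) `^ p^-1 * (\sum_(i <- s) b i `^ q) `^ q^-1.
Proof.
move=> p0 q0 pq a0 b0; elim: s => [|x s IH]; first by rewrite !big_nil mulr_ge0 ?powR_ge0.
rewrite !big_cons; apply: le_trans (lerD (le_refl _) IH) _.
have A0 : 0 <= \sum_(i <- s) a i `^ p by rewrite sumr_ge0 // => i _; rewrite powR_ge0.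
have B0 : 0 <= \sum_(i <- s) b i `^ q by rewrite sumr_ge0 // => i _; rewrite powR_ge0.
move: (\sum_(i <- s) a i `^ p) (\sum_(i <- s) b i `^ q) A0 B0 => A B A0 B0.
have := @hoelder2 R (a x) _ (b x) _ p q (a0 x) (powR_ge0 A p^-1)
  (b0 x) (powR_ge0 B q^-1) p0 q0 pq.
by rewrite (powRVK p0 A0) (powRVK q0 B0).
Qed.

Lemma sum_triangle_swap (F : nat -> nat -> R) N :
  \sum_(0 <= m < N) \sum_(1 <= k < m.+1) F m k =
  \sum_(1 <= k < N) \sum_(k <= m < N) F m k.
Proof.
elim: N => [|N IH]; first by rewrite !big_geq.
rewrite big_nat_recr //= IH.
rewrite [in RHS](eq_big_nat _ _ (F2 := fun k => \sum_(k <= m < N) F m k + F N k));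
  last by move=> k /andP[_ kN]; rewrite big_nat_recr.
rewrite big_split /=; congr (_ + _).
case: N {IH} => [|N]; first by rewrite !big_geq.
by rewrite [in RHS]big_nat_recr //= [X in _ = _ + X]big_geq // addr0.
Qed.

End PowerInequalities.

Section ExtendedSums.
Variable R : realType.
Local Open Scope ereal_scope.

Lemma ge0_esumZl (T : choiceType) (I : set T) (r : R) (a : T -> \bar R) :
  (0 <= r)%R -> (forall i, 0 <= a i) ->
  \esum_(i in I) (r%:E * a i) = r%:E * \esum_(i in I) a i.
Proof.
move=> r0 a0; rewrite /esum -ereal_supZl //; last first.
  by apply/set0P; exists 0; exists set0; [exact: fsets_set0|rewrite fsbig_set0].
congr ereal_sup; apply/seteqP; split => x /=.
  move=> [A [fA AI] <-]; exists (\sum_(x \in A) a x); first by exists A.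
  by rewrite !fsbig_finite // ge0_sume_distrr.
move=> [y [A [fA AI] <-] <-]; exists A => //.
by rewrite !fsbig_finite // ge0_sume_distrr.
Qed.

Lemma esum_swap (T1 T2 : choiceType) (I : set T1) (J : set T2)
  (a : T1 -> T2 -> \bar R) : (forall i j, 0 <= a i j) ->
  \esum_(i in I) \esum_(j in J) a i j = \esum_(j in J) \esum_(i in I) a i j.
Proof.
move=> a0; rewrite !esum_esum; try by move=> *; apply: a0.
rewrite (@reindex_esum R _ _ (J `*`` fun=> I) (I `*`` fun=> J)
  (fun k => (k.2, k.1)) (fun k => a k.1 k.2)) //.
split.
- by move=> [x y] /= [Jx Iy].
- by move=> [x1 y1] [x2 y2] _ _ /= [-> ->].
- by move=> [x y] /= [Ix Jy]; exists (y, x).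
Qed.

Lemma esum_subset (T : choiceType) (A B : set T) (a : T -> \bar R) :
  A `<=` B -> (forall i, 0 <= a i) ->
  \esum_(i in A) a i <= \esum_(i in B) a i.
Proof.
move=> AB a0; rewrite esum_mkcond [leRHS]esum_mkcond; apply: le_esum => i _.
case: ifPn => [/[!inE] /AB Bi|_]; first by rewrite ifT // inE.
by case: ifPn.
Qed.

Lemma esum_bigcup_nat (T : choiceType) (B : nat -> set T) (a : T -> \bar R)
  (lo hi : nat) :
  (forall i j, (lo <= i < hi)%N -> (lo <= j < hi)%N -> i <> j ->
     B i `&` B j = set0) ->
  (forall x, 0 <= a x) ->
  \esum_(x in [set x | exists2 k, (lo <= k < hi)%N & B k x]) a x =
  \sum_(lo <= k < hi) \esum_(x in B k) a x.
Proof.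
move=> dis a0; elim: hi dis => [|hi IH] dis.
  rewrite big_geq // (_ : [set x | _] = set0) ?esum_set0 //.
  by apply/seteqP; split => x //= [k]; rewrite ltn0 andbF.
have [lohi|hilo] := leqP lo hi; last first.
  rewrite big_geq // (_ : [set x | _] = set0) ?esum_set0 //.
  by apply/seteqP; split => x //= [k /andP[h1 h2]]; lia.
rewrite big_nat_recr //= -IH; last by move=> i j hi1 hj1; apply: dis; lia.
rewrite (esumID (B hi)) // addeC; congr (_ + _).
  congr esum; apply/seteqP; split => x /=.
    move=> [[k /andP[k1 k2] Bk] nB]; exists k => //; rewrite k1 /=.
    rewrite ltn_neqAle -ltnS k2 andbT; apply/eqP => kh; apply: nB; by rewrite -kh.
  move=> [k /andP[k1 k2] Bk]; split; first by exists k => //; lia.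
  move=> Bh; have : (B k `&` B hi) x by [].
  by rewrite dis //; lia.
congr esum; apply/seteqP; split => x /=; first by case.
by move=> Bx; split => //; exists hi => //; lia.
Qed.

Lemma sume_term_fin_num (X : nat -> \bar R) N m : (forall i, 0 <= X i) ->
  \sum_(0 <= i < N) X i < +oo -> (m < N)%N -> X m \is a fin_num.
Proof.
move=> X0 hs mN; rewrite ge0_fin_numE //; apply: le_lt_trans hs.
rewrite (@big_cat_nat _ _ _ m 0 N _ _ (leq0n m) (ltnW mN)) /= (@big_ltn _ _ _ m N) //.
by rewrite addeCA; apply: leeDl; rewrite adde_ge0 //; exact: sume_ge0.
Qed.

End ExtendedSums.

Section LevelChain.
Variables (R : realType) (n : nat) (D K a g : nat -> R) (p : R).
Hypotheses (p1 : 1 <= p) (D_ge0 : forall i, 0 <= D i) (K_ge0 : forall i, 0 <= K i)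
  (K_gt0 : forall m, (m < n)%N -> 0 < K m)
  (a_ge0 : forall m, 0 <= a m) (g_ge0 : forall m, 0 <= g m)
  (level : forall m, (m < n)%N ->
     (K m * a m.+1) `^ p^-1 <= (D m * a m) `^ p^-1 + g m `^ p^-1).

Let P k m := \prod_(k <= i < m) (D i / K i).

Let P_ge0 k m : 0 <= P k m.
Proof. by rewrite prodr_ge0 // => i _; rewrite divr_ge0. Qed.

Let PS k m r : (k <= m)%N -> P k m.+1 `^ r = P k m `^ r * (D m / K m) `^ r.
Proof. by move=> km; rewrite /P big_nat_recr //= powRM ?divr_ge0 //; exact: P_ge0. Qed.

Let p_gt0 : 0 < p. Proof. by rewrite (lt_le_trans ltr01). Qed.

Lemma level_step m : (m < n)%N -> a m.+1 `^ p^-1 <=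
  (D m / K m) `^ p^-1 * a m `^ p^-1 + ((K m) `^ p^-1)^-1 * g m `^ p^-1.
Proof.
move=> mn; have Kp : 0 < K m `^ p^-1 by rewrite powR_gt0 ?K_gt0.
have := level mn; rewrite !powRM ?invr_ge0 // powR_inv // => H.
set k := K m `^ p^-1 in Kp H *.
have -> : D m `^ p^-1 * k^-1 * a m `^ p^-1 + k^-1 * g m `^ p^-1 =
    k^-1 * (D m `^ p^-1 * a m `^ p^-1 + g m `^ p^-1) by ring.
by rewrite -(ler_pM2l Kp) mulrA mulfV ?gt_eqF // mul1r.
Qed.

Lemma level_chain m : (m <= n)%N -> a m `^ p^-1 <=
  P 0 m `^ p^-1 * a 0 `^ p^-1 +
  \sum_(1 <= k < m.+1) ((K k.-1) `^ p^-1)^-1 * P k m `^ p^-1 * g k.-1 `^ p^-1.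
Proof.
elim: m => [_|m IH mn]; first by rewrite /P !big_geq // powR1 mul1r addr0.
apply: le_trans (level_step mn) _.
apply: le_trans (lerD (ler_wpM2l (powR_ge0 _ _) (IH (ltnW mn))) (le_refl _)) _.
rewrite [in leRHS]big_nat_recr //= mulrDr big_distrr /= addrA le_eqVlt; apply/orP; left.
apply/eqP; congr (_ + _ + _).
- by rewrite (@PS 0 m) // mulrCA mulrA.
- by apply: eq_big_nat => k /andP[k1 k2]; rewrite (@PS k m) //; ring.
- by rewrite /P big_geq // powR1 mulr1.
Qed.

Let G := \sum_(0 <= k < n) g k.

Let G_ge0 : 0 <= G. Proof. exact: sumr_ge0. Qed.

Let sum_g_le m : (m <= n)%N -> \sum_(1 <= k < m.+1) g k.-1 <= G.
Proof.
move=> mn; rewrite big_add1 /= /G (@big_cat_nat _ _ _ m 0 n _ _ (leq0n m) mn) /= lerDl.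
exact: sumr_ge0.
Qed.

Section ConjugateExponent.
Variable q : R.
Hypotheses (q_gt0 : 0 < q) (pq : p^-1 + q^-1 = 1).

Let C m := \sum_(1 <= k < m.+1) (K k.-1 `^ (q / p))^-1 * P k m `^ (q / p).


(* Hoelder's inequality in [k] with the exponents [q] and [p]. *)
Lemma chain_tail_powR_le m : (m <= n)%N ->
  (\sum_(1 <= k < m.+1) ((K k.-1) `^ p^-1)^-1 * P k m `^ p^-1 * g k.-1 `^ p^-1) `^ p
  <= C m `^ (p / q) * G.
Proof.
move=> mn.
have qp : q^-1 + p^-1 = 1 by rewrite addrC.
have c_ge0 k : 0 <= (K k.-1 `^ p^-1)^-1 * P k m `^ p^-1.
  by rewrite mulr_ge0 ?invr_ge0 ?powR_ge0.
have := @hoelder_sum R nat (index_iota 1 m.+1) q p _ (fun k => g k.-1 `^ p^-1)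
  q_gt0 p_gt0 qp c_ge0 (fun k => powR_ge0 _ _).
have -> : \sum_(k <- index_iota 1 m.+1) ((K k.-1 `^ p^-1)^-1 * P k m `^ p^-1) `^ q = C m.
  apply: eq_bigr => k _; rewrite powRM ?invr_ge0 ?powR_ge0 // powR_inv ?powR_ge0 //.
  by rewrite -!powRrM (mulrC p^-1 q).
have -> : \sum_(k <- index_iota 1 m.+1) (g k.-1 `^ p^-1) `^ p = \sum_(1 <= k < m.+1) g k.-1.
  by apply: eq_bigr => k _; rewrite powRVK.
move=> hoelder_tail.
have tail_le : \sum_(1 <= k < m.+1) (K k.-1 `^ p^-1)^-1 * P k m `^ p^-1 * g k.-1 `^ p^-1
    <= C m `^ q^-1 * G `^ p^-1.
  apply: le_trans hoelder_tail _; apply: ler_wpM2l; first exact: powR_ge0.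
  apply: ge0_ler_powR; rewrite ?nnegrE ?G_ge0 ?sum_g_le ?invr_ge0 ?(ltW p_gt0) //.
  exact: sumr_ge0.
apply: le_trans (ge0_ler_powR (ltW p_gt0) _ _ tail_le) _.
- by rewrite nnegrE sumr_ge0 // => k _; rewrite !mulr_ge0 ?invr_ge0 ?powR_ge0.
- by rewrite nnegrE mulr_ge0 ?powR_ge0.
by rewrite powRM ?powR_ge0 // powRVK // -powRrM (mulrC q^-1 p).
Qed.

Lemma sum_levels_le :
  (\sum_(0 <= m < n.+1) a m) `^ p^-1 <=
  (\sum_(0 <= m < n.+1) P 0 m) `^ p^-1 * a 0 `^ p^-1 +
  (\sum_(1 <= m < n.+1) C m `^ (p / q)) `^ p^-1 * G `^ p^-1.
Proof.
set y := fun m => P 0 m `^ p^-1 * a 0 `^ p^-1.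
set z := fun m => \sum_(1 <= k < m.+1)
   ((K k.-1) `^ p^-1)^-1 * P k m `^ p^-1 * g k.-1 `^ p^-1.
have y_ge0 m : 0 <= y m by rewrite mulr_ge0 ?powR_ge0.
have z_ge0 m : 0 <= z m.
  by rewrite sumr_ge0 // => k _; rewrite !mulr_ge0 ?invr_ge0 ?powR_ge0.
have powRV_le x x' : 0 <= x -> x <= x' -> x `^ p^-1 <= x' `^ p^-1.
  by move=> x0 xx'; apply: ge0_ler_powR; rewrite ?nnegrE ?invr_ge0 ?(ltW p_gt0) ?(le_trans x0 xx').
have sum_a_le : \sum_(0 <= m < n.+1) a m <= \sum_(0 <= m < n.+1) (y m + z m) `^ p.
  apply: ler_sum_nat => m /andP[_ mn]; rewrite -{1}(powRVK p_gt0 (a_ge0 m)).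
  by apply: ge0_ler_powR; rewrite ?nnegrE ?powR_ge0 ?addr_ge0 ?(ltW p_gt0) // level_chain.
apply: le_trans (powRV_le _ _ (sumr_ge0 _ _) sum_a_le) _ => [m _|]; first exact: a_ge0.
apply: le_trans (minkowski_sum _ p1 y_ge0 z_ge0) _; apply: lerD.
  rewrite (eq_bigr (fun m => P 0 m * a 0)); last by move=> m _; rewrite powRM ?powR_ge0 // !powRVK.
  by rewrite -big_distrl /= powRM // sumr_ge0.
have z0 : z 0%N = 0 by rewrite /z big_geq.
rewrite big_ltn // z0 powR0 ?gt_eqF // add0r -powRM ?sumr_ge0 // => [|m _];
  last exact: powR_ge0.
apply: powRV_le; first by rewrite sumr_ge0 // => m _; rewrite powR_ge0.
by rewrite big_distrl /=; apply: ler_sum_nat => m /andP[_ mn]; exact: chain_tail_powR_le.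
Qed.

Lemma grad_coef_gt0 : (0 < n)%N -> 0 < \sum_(1 <= m < n.+1) C m `^ (p / q).
Proof.
move=> n_gt0; rewrite big_ltn // ltr_wpDr ?sumr_ge0 // => [m _|]; first exact: powR_ge0.
rewrite powR_gt0 // /C big_nat1 /P big_geq // powR1 mulr1.
by rewrite invr_gt0 powR_gt0 ?K_gt0.
Qed.

End ConjugateExponent.

Lemma sum_levels_le1 : p = 1 ->
  \sum_(0 <= m < n.+1) a m <=
  (\sum_(0 <= m < n.+1) P 0 m) * a 0 +
  (\big[Num.max/0]_(1 <= k < n.+1) ((K k.-1)^-1 * \sum_(k <= m < n.+1) P k m)) * G.
Proof.
move=> pE.
have chain1 m : (m <= n)%N ->
    a m <= P 0 m * a 0 + \sum_(1 <= k < m.+1) (K k.-1)^-1 * P k m * g k.-1.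
  move=> mn; have := level_chain mn; rewrite pE invr1 !powRr1 //.
  by under eq_bigr do rewrite !powRr1 //.
apply: le_trans (ler_sum_nat (G := fun m => P 0 m * a 0 +
    \sum_(1 <= k < m.+1) (K k.-1)^-1 * P k m * g k.-1) _) _.
  by move=> m /andP[_ mn]; exact: chain1.
rewrite big_split /= -big_distrl /= lerD2l sum_triangle_swap.
set M := \big[Num.max/0]_(1 <= k < n.+1) _.
rewrite big_add1 /= big_distrr /=; apply: ler_sum_nat => k /andP[_ kn].
rewrite -big_distrl /= ler_wpM2r // -big_distrr /=.
have := @le_bigmax_seq _ R nat (index_iota 1 n.+1) 0 k.+1 xpredT
  (fun k => (K k.-1)^-1 * \sum_(k <= m < n.+1) P k m).
by rewrite mem_index_iota /= => /(_ _ isT); apply; lia.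
Qed.

Lemma grad_coef1_gt0 : (0 < n)%N ->
  0 < \big[Num.max/0]_(1 <= k < n.+1) ((K k.-1)^-1 * \sum_(k <= m < n.+1) P k m).
Proof.
move=> n_gt0.
have := @le_bigmax_seq _ R nat (index_iota 1 n.+1) 0 1%N xpredT
  (fun k => (K k.-1)^-1 * \sum_(k <= m < n.+1) P k m).
rewrite mem_index_iota /= ltnS n_gt0 => /(_ isT isT); apply: lt_le_trans.
rewrite mulr_gt0 ?invr_gt0 ?K_gt0 // big_ltn // /P big_geq // ltr_wpDr //.
by rewrite sumr_ge0 // => m _; rewrite prodr_ge0 // => i _; rewrite divr_ge0.
Qed.

End LevelChain.

Lemma lee_add_pinfty (R : realType) (x y : \bar R) (c : R) :
  0 < c -> (0 <= y)%E -> (x <= y + c%:E * +oo)%E.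
Proof.
move=> c0 y0; rewrite gt0_muley ?lte_fin // addey ?leey //.
by rewrite gt_eqF // (lt_le_trans ltNy0 y0).
Qed.

Section ComplexModulus.
Variable R : realType.
Implicit Types x y : R[i].

Lemma cmod_ge0 x : 0 <= cmod x.
Proof. by case: x => a b; rewrite /cmod /= sqrtr_ge0. Qed.

Lemma cmod_distrC x y : cmod (x - y) = cmod (y - x).
Proof. by rewrite /cmod -opprB normcN. Qed.

Lemma cmod_le_add_dist x y : cmod y <= cmod x + cmod (x - y).
Proof. by rewrite cmod_distrC -{1}(subrK x y) addrC le_normcD. Qed.

End ComplexModulus.

Section Graph.
Variables (R : realType) (V : countType) (w : V -> V -> R) (nu : V -> R)
  (n : nat) (S : nat -> set V).
Hypotheses (w_sym : forall u v, w u v = w v u) (w_ge0 : forall u v, 0 <= w u v)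
  (nu_gt0 : forall v, 0 < nu v)
  (S_disj : forall i j, (i <= n)%N -> (j <= n)%N -> i <> j -> S i `&` S j = set0)
  (S_cover : forall v, exists2 m, (m <= n)%N & S m v)
  (D_fin : forall m, (m < n)%N -> Dm w nu S m \is a fin_num)
  (K_fin : forall m, (m < n)%N -> Km w nu S m \is a fin_num)
  (Km_gt0 : forall m, (m < n)%N -> (0 < Km w nu S m)%E).

Let D m := fine (Dm w nu S m).
Let K m := fine (Km w nu S m).

Lemma wA_ge0 A v : (0 <= wA w A v)%E.
Proof. by apply: esum_ge0 => u _; rewrite lee_fin. Qed.

Lemma D_ge0 m : 0 <= D m.
Proof.
rewrite /D /Dm; have [[v Sv]|NS] := pselect (exists v, S m v).
  apply/fine_ge0/(le_trans _ (ereal_sup_ubound _)); last by exists v.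
  by rewrite mule_ge0 ?wA_ge0 // lee_fin invr_ge0 ltW.
rewrite (_ : [set _ | v in S m] = set0) ?ereal_sup0 //.
by apply/seteqP; split => // x [v Sv _]; apply: NS; exists v.
Qed.

Lemma K_ge0 m : 0 <= K m.
Proof.
apply/fine_ge0/le_ereal_inf_tmp => _ [v Sv <-].
by rewrite mule_ge0 ?wA_ge0 // lee_fin invr_ge0 ltW.
Qed.

Lemma K_gt0 m : (m < n)%N -> 0 < K m.
Proof. by move=> mn; rewrite fine_gt0 // Km_gt0 //= ltey_eq K_fin. Qed.

Lemma wA_le_Dnu m u : (m < n)%N -> S m u -> (wA w (S m.+1) u <= (D m * nu u)%:E)%E.
Proof.
move=> mn Su; have : (wA w (S m.+1) u * (nu u)^-1%:E <= Dm w nu S m)%E.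
  by apply: ereal_sup_ubound; exists u.
move=> /(lee_wpmul2r (x := (nu u)%:E)); rewrite lee_fin ltW // => /(_ isT).
by rewrite -muleA -EFinM mulVf ?gt_eqF // mule1 EFinM fineK ?D_fin.
Qed.

Lemma Knu_le_wA m v : (m < n)%N -> S m.+1 v -> ((K m * nu v)%:E <= wA w (S m) v)%E.
Proof.
move=> mn Sv; have : (Km w nu S m <= wA w (S m) v * (nu v)^-1%:E)%E.
  by apply: ereal_inf_lbound; exists v.
move=> /(lee_wpmul2r (x := (nu v)%:E)); rewrite lee_fin ltW // => /(_ isT).
by rewrite -muleA -EFinM mulVf ?gt_eqF // mule1 EFinM fineK ?K_fin.
Qed.

Let grad_level p (f : V -> R[i]) m := \esum_(v in S m.+1) \esum_(u in S m)
  ((cmod (f u - f v)) `^ p * w u v)%:E.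
Let grad_total p (f : V -> R[i]) := \esum_(uv in [set: V * V])
  ((cmod (f uv.1 - f uv.2)) `^ p * w uv.1 uv.2)%:E.

Variables (p : R) (f : V -> R[i]).
Hypothesis p_ge1 : 1 <= p.

Let psum_ge0 A : (0 <= psum p nu A f)%E.
Proof. by apply: esum_ge0 => v _; rewrite lee_fin mulr_ge0 ?powR_ge0 ?ltW. Qed.

Let grad_level_ge0 m : (0 <= grad_level p f m)%E.
Proof. by apply: esum_ge0 => v _; apply: esum_ge0 => u _; rewrite lee_fin mulr_ge0 ?powR_ge0. Qed.

Let grad_total_ge0 : (0 <= grad_total p f)%E.
Proof. by apply: esum_ge0 => uv _; rewrite lee_fin mulr_ge0 ?powR_ge0. Qed.

Lemma Kpsum_le_cross m : (m < n)%N ->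
  ((K m)%:E * psum p nu (S m.+1) f <=
   \esum_(v in S m.+1) \esum_(u in S m) ((cmod (f v)) `^ p * w u v)%:E)%E.
Proof.
move=> mn; rewrite /psum -ge0_esumZl ?K_ge0 // => [|v]; last first.
  by rewrite lee_fin mulr_ge0 ?powR_ge0 ?ltW.
apply: le_esum => v Sv.
rewrite (eq_esum (fun u _ => EFinM (cmod (f v) `^ p) (w u v))) ge0_esumZl ?powR_ge0 //;
  last by move=> u; rewrite lee_fin.
rewrite -EFinM mulrCA EFinM; apply: lee_wpmul2l; first by rewrite lee_fin powR_ge0.
exact: Knu_le_wA.
Qed.

Lemma cross_le_Dpsum m : (m < n)%N ->
  (\esum_(v in S m.+1) \esum_(u in S m) ((cmod (f u)) `^ p * w u v)%:E <=
   (D m)%:E * psum p nu (S m) f)%E.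
Proof.
move=> mn; rewrite esum_swap => [|v u]; last by rewrite lee_fin mulr_ge0 ?powR_ge0.
rewrite /psum -ge0_esumZl ?D_ge0 // => [|u]; last first.
  by rewrite lee_fin mulr_ge0 ?powR_ge0 ?ltW.
apply: le_esum => u Su.
rewrite (eq_esum (fun v _ => EFinM (cmod (f u) `^ p) (w u v))) ge0_esumZl ?powR_ge0 //;
  last by move=> v; rewrite lee_fin.
rewrite (eq_esum (fun v _ => congr1 EFin (w_sym u v))).
rewrite -(EFinM (D m)) mulrCA (EFinM (cmod (f u) `^ p)).
by apply: lee_wpmul2l; [rewrite lee_fin powR_ge0 | exact: wA_le_Dnu].
Qed.

(* Pointwise [|f v|^p <= l^(1-p) |f u|^p + (1-l)^(1-p) |f u - f v|^p], summed
   against [w u v] over [u in S m, v in S (m+1)]. *)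
Lemma level_psum_le m l : (m < n)%N -> 0 < l < 1 ->
  ((K m)%:E * psum p nu (S m.+1) f <=
   (split_weight p l * D m)%:E * psum p nu (S m) f +
   (split_weight p (1 - l))%:E * grad_level p f m)%E.
Proof.
move=> mn /[dup] l01 /andP[l0 l1].
have wl_ge0 : 0 <= split_weight p l by rewrite split_weight_ge0 ?ltW.
have wl'_ge0 : 0 <= split_weight p (1 - l) by rewrite split_weight_ge0 // subr_ge0 ltW.
apply: le_trans (Kpsum_le_cross mn) _.
apply: (@le_trans _ _ (\esum_(v in S m.+1) \esum_(u in S m)
   ((split_weight p l)%:E * ((cmod (f u) `^ p * w u v)%:E) +
    (split_weight p (1 - l))%:E * ((cmod (f u - f v) `^ p * w u v)%:E)))%E).
  apply: le_esum => v Sv; apply: le_esum => u Su.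
  rewrite -!EFinM -EFinD lee_fin !mulrA -mulrDl ler_wpM2r //.
  apply: le_trans (powRD_le_split p_ge1 l01 (cmod_ge0 _) (cmod_ge0 _)).
  by apply: ge0_ler_powR; rewrite ?nnegrE ?addr_ge0 ?cmod_ge0 ?cmod_le_add_dist ?(le_trans ler01).
have e_ge0 x u v : (0 <= (x `^ p * w u v)%:E)%E by rewrite lee_fin mulr_ge0 ?powR_ge0.
have se_ge0 x v : (0 <= \esum_(u in S m) (x u `^ p * w u v)%:E)%E.
  by apply: esum_ge0 => u _; exact: e_ge0.
rewrite (eq_esum (b := fun v =>
    (split_weight p l)%:E * (\esum_(u in S m) (cmod (f u) `^ p * w u v)%:E) +
    (split_weight p (1 - l))%:E * \esum_(u in S m) (cmod (f u - f v) `^ p * w u v)%:E)%E).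
  rewrite esumD => [|v _|v _]; rewrite ?mule_ge0 ?lee_fin //.
  rewrite !ge0_esumZl //.
  apply: leeD => //; rewrite (EFinM (split_weight p l)) -muleA.
  by apply: lee_wpmul2l; [rewrite lee_fin | exact: cross_le_Dpsum].
move=> v _; rewrite esumD => [|u _|u _];
  rewrite ?mule_ge0 ?lee_fin ?wl_ge0 ?wl'_ge0 ?mulr_ge0 ?powR_ge0 //.
by rewrite !ge0_esumZl // => u; exact: e_ge0.
Qed.

Lemma psum_split : psum p nu setT f = \sum_(0 <= m < n.+1) psum p nu (S m) f.
Proof.
rewrite /psum -esum_bigcup_nat => [|i j /andP[_ ilt] /andP[_ jlt]|v]; last 2 first.
- exact: S_disj.
- by rewrite lee_fin mulr_ge0 ?powR_ge0 ?ltW.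
by congr esum; apply/seteqP; split => v // _; have [m mn Sm] := S_cover v; exists m.
Qed.

Lemma sum_grad_level_le : (\sum_(0 <= m < n) grad_level p f m <= grad_total p f)%E.
Proof.
have e_ge0 (uv : V * V) : (0 <= ((cmod (f uv.1 - f uv.2)) `^ p * w uv.1 uv.2)%:E)%E.
  by rewrite lee_fin mulr_ge0 ?powR_ge0.
have gradE m : grad_level p f m = \esum_(uv in S m.+1 `*`` (fun _ => S m))
    ((cmod (f uv.1 - f uv.2)) `^ p * w uv.1 uv.2)%:E.
  rewrite /grad_level esum_esum => [|v u _ _]; last by rewrite lee_fin mulr_ge0 ?powR_ge0.
  by apply: eq_esum => uv _; rewrite cmod_distrC w_sym.
rewrite (eq_bigr _ (fun m _ => gradE m)) -esum_bigcup_nat //; last first.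
  move=> i j /andP[_ ilt] /andP[_ jlt] ij; apply/seteqP; split => // uv [[Si _] [Sj _]].
  have : (S i.+1 `&` S j.+1) uv.1 by [].
  by rewrite S_disj // => /eqP; rewrite eqSS => /eqP.
exact: esum_subset.
Qed.

Hypothesis hf : (psum p nu setT f < +oo)%E.

Lemma psum_level_fin_num m : (m <= n)%N -> psum p nu (S m) f \is a fin_num.
Proof. by move: hf; rewrite psum_split => hf' mn; apply: sume_term_fin_num hf' _. Qed.

Let a m := fine (psum p nu (S m) f).
Let g m := fine (grad_level p f m).

Section FiniteGradient.
Hypothesis hG : (0 < n)%N -> (grad_total p f < +oo)%E.

Lemma grad_level_fin_num m : (m < n)%N -> grad_level p f m \is a fin_num.
Proof.
move=> mn; have n_gt0 : (0 < n)%N by exact: leq_ltn_trans mn.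
exact: sume_term_fin_num (le_lt_trans sum_grad_level_le (hG n_gt0)) mn.
Qed.

Lemma level_fine m : (m < n)%N ->
  (K m * a m.+1) `^ p^-1 <= (D m * a m) `^ p^-1 + g m `^ p^-1.
Proof.
move=> mn; apply: powRV_le_of_split => //; rewrite ?mulr_ge0 ?K_ge0 ?D_ge0 ?fine_ge0 //.
move=> l hl; have := level_psum_le mn hl.
rewrite -(fineK (psum_level_fin_num mn)) -(fineK (psum_level_fin_num (ltnW mn))).
rewrite -(fineK (grad_level_fin_num mn)) -!EFinM -EFinD lee_fin.
by rewrite -/(a _) -/(a _) -/(g _) mulrA.
Qed.

Lemma norms_of_levels :
  [/\ pnorm p nu setT f = ((\sum_(0 <= m < n.+1) a m) `^ p^-1)%:E,
      pnorm p nu (S 0) f = (a 0 `^ p^-1)%:E &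
      (((\sum_(0 <= m < n) g m) `^ p^-1)%:E <= gradnorm p w f)%E].
Proof.
split; rewrite /pnorm ?psum_split -?poweR_EFin -?sumEFin.
- by congr poweR; apply: eq_big_nat => m /andP[_ mn]; rewrite fineK ?psum_level_fin_num.
- by rewrite fineK ?psum_level_fin_num.
rewrite sumEFin; apply: gt0_ler_poweR; rewrite ?invr_ge0 ?(le_trans ler01) //.
- by rewrite in_itv /= leey andbT lee_fin sumr_ge0 // => m _; rewrite fine_ge0.
- by rewrite in_itv /= leey grad_total_ge0.
rewrite -sumEFin; apply: le_trans sum_grad_level_le; rewrite le_eqVlt; apply/orP; left.
by apply/eqP/eq_big_nat => m /andP[_ mn]; rewrite fineK ?grad_level_fin_num.
Qed.

End FiniteGradient.

Lemma grad_total_fin_or_gradnorm_pinfty :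
  ((0 < n)%N -> (grad_total p f < +oo)%E) \/ (0 < n)%N /\ gradnorm p w f = +oo%E.
Proof.
have [n0|n_gt0] := posnP n; first by left.
have [Gfin|] := ltP (grad_total p f) +oo%E; first by left.
rewrite leye_eq => /eqP Ginf; right; split => //.
by rewrite /gradnorm -/(grad_total p f) Ginf poweRyr // invr_eq0 gt_eqF // (lt_le_trans ltr01).
Qed.

Let a_ge0 m : 0 <= a m. Proof. exact: fine_ge0. Qed.
Let g_ge0 m : 0 <= g m. Proof. exact: fine_ge0. Qed.

Let ratio_prod_ge0 k m : 0 <= \prod_(k <= i < m) (D i / K i).
Proof. by rewrite prodr_ge0 // => i _; rewrite divr_ge0 ?D_ge0 ?K_ge0. Qed.

Lemma norm_le_boundary_grad q : 0 < q -> p^-1 + q^-1 = 1 ->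
  (pnorm p nu setT f <=
    ((\sum_(0 <= m < n.+1) \prod_(0 <= j < m) (D j / K j)) `^ p^-1)%:E
      * pnorm p nu (S 0%N) f
    + ((\sum_(1 <= m < n.+1)
          (\sum_(1 <= k < m.+1)
             (K k.-1 `^ (q / p))^-1
             * (\prod_(k <= i < m) (D i / K i)) `^ (q / p)) `^ (p / q))
        `^ p^-1)%:E
      * gradnorm p w f)%E.
Proof.
move=> q_gt0 pq.
case: grad_total_fin_or_gradnorm_pinfty => [hG|[n_gt0 ->]].
  have [-> -> grad_le] := norms_of_levels hG.
  apply: le_trans (leeD (lexx _) (lee_wpmul2l _ grad_le)); last by rewrite lee_fin powR_ge0.
  rewrite -!EFinM -EFinD lee_fin.
  by have := sum_levels_le p_ge1 D_ge0 K_ge0 K_gt0 a_ge0 g_ge0 (level_fine hG) q_gt0 pq.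
apply: lee_add_pinfty; last by rewrite mule_ge0 ?lee_fin ?powR_ge0 ?poweR_ge0.
by rewrite powR_gt0 // (grad_coef_gt0 D p K_gt0 q n_gt0).
Qed.

Lemma norm1_le_boundary_grad : p = 1 ->
  (pnorm p nu setT f <=
    (\sum_(0 <= m < n.+1) \prod_(0 <= j < m) (D j / K j))%:E * pnorm p nu (S 0%N) f
    + (\big[Num.max/0]_(1 <= k < n.+1)
         ((K k.-1)^-1 * \sum_(k <= m < n.+1) \prod_(k <= i < m) (D i / K i)))%:E
      * gradnorm p w f)%E.
Proof.
move=> p1.
have grad_coef_ge0 : 0 <= \big[Num.max/0]_(1 <= k < n.+1)
    ((K k.-1)^-1 * \sum_(k <= m < n.+1) \prod_(k <= i < m) (D i / K i)).
  elim/big_ind: _ => // [x y x0 y0|k _]; first by rewrite le_max x0.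
  by rewrite mulr_ge0 ?invr_ge0 ?K_ge0 ?sumr_ge0.
case: grad_total_fin_or_gradnorm_pinfty => [hG|[n_gt0 ->]].
  have [-> -> grad_le] := norms_of_levels hG.
  apply: le_trans (leeD (lexx _) (lee_wpmul2l _ grad_le)); last by rewrite lee_fin.
  rewrite p1 invr1 !powRr1 ?sumr_ge0 // -!EFinM -EFinD lee_fin.
  exact: sum_levels_le1 p_ge1 D_ge0 K_ge0 K_gt0 a_ge0 g_ge0 (level_fine hG) p1.
apply: lee_add_pinfty; last by rewrite mule_ge0 ?poweR_ge0 // lee_fin sumr_ge0.
exact: grad_coef1_gt0 D_ge0 K_ge0 K_gt0 n_gt0.
Qed.

End Graph.

Theorem theorem1p1 (R : realType) (V : countType)
  (w : V -> V -> R) (nu : V -> R) (n : nat) (S : nat -> set V) :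
  (forall u v, w u v = w v u) ->
  (forall u v, 0 <= w u v) ->
  (forall u, w u u = 0) ->
  (forall v, 0 < nu v) ->
  (* S_0, ..., S_n is a partition of V into disjoint sets *)
  (forall i j, (i <= n)%N -> (j <= n)%N -> i <> j -> S i `&` S j = set0) ->
  (forall v, exists2 m, (m <= n)%N & S m v) ->
  (* D_m and K_m are finite real numbers (implicit in the paper), K_m > 0 *)
  (forall m, (m < n)%N -> Dm w nu S m \is a fin_num) ->
  (forall m, (m < n)%N -> Km w nu S m \is a fin_num) ->
  (forall m, (m < n)%N -> (0 < Km w nu S m)%E) ->
  let D m := fine (Dm w nu S m) in
  let K m := fine (Km w nu S m) in
  let f0norm p f := pnorm p nu (S 0%N) f in
  (forall p q : R, 1 < p -> 1 < q -> p^-1 + q^-1 = 1 ->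
   forall f : V -> R[i], (psum p nu setT f < +oo)%E ->
   (pnorm p nu setT f <=
      ((\sum_(0 <= m < n.+1) \prod_(0 <= j < m) (D j / K j)) `^ p^-1)%:E
        * f0norm p f
      + ((\sum_(1 <= m < n.+1)
            (\sum_(1 <= k < m.+1)
               (K k.-1 `^ (q / p))^-1
               * (\prod_(k <= i < m) (D i / K i)) `^ (q / p)) `^ (p / q))
          `^ p^-1)%:E
        * gradnorm p w f)%E)
  /\
  (forall f : V -> R[i], (psum 1%R nu setT f < +oo)%E ->
   (pnorm 1%R nu setT f <=
      (\sum_(0 <= m < n.+1) \prod_(0 <= j < m) (D j / K j))%:E * f0norm 1%R f
      + (\big[Num.max/0]_(1 <= k < n.+1)
           ((K k.-1)^-1 * \sum_(k <= m < n.+1) \prod_(k <= i < m) (D i / K i)))%:E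
        * gradnorm 1%R w f)%E).
Proof.
move=> w_sym w_ge0 _ nu_gt0 S_disj S_cover D_fin K_fin K_gt0 D K f0norm.
split=> [p q p_gt1 q_gt1 pq f hf | f hf].
- apply: norm_le_boundary_grad => //; first exact: ltW.
  exact: lt_trans q_gt1.
- exact: norm1_le_boundary_grad.
Qed.
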